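(* Let $p\ge1$, $\nu>p$, $\epsilon>0$, $\gamma>0$, let $B$ be a $p\times p$ symmetric positive definite matrix and $S$ a $p\times p$ symmetric positive semidefinite matrix. Let $M=\{X\in\mathbb{S}^p: X-\epsilon I\succeq0\}$ and let $N$ be as in the context. Define, for $X\in\mathbb{S}^p_{++}$ and $Y\in\mathbb{R}^{p\times p}$, $$P_\gamma(X,Y)=-(\nu-p)\log(\det X)+\mathrm{tr}((B^{-1}+S)X)+\frac{\gamma}{2}\|X-Y\|_F^2.$$ Then the problem $\min\{P_\gamma(X,Y):(X,Y)\in M\times N\}$ has a unique minimizer.
   Context: $\mathbb{S}^p$ ($\mathbb{S}^p_{++}$) is the set of $p\times p$ symmetric (symmetric positive definite) matrices; $\|\cdot\|_F$ is the Frobenius norm. Each node $i\in\{1,\dots,p\}$ has a type $s_i$ and a neighbor set $\mathcal{N}_i\subseteq\{1,\dots,p\}\setminus\{i\}$, and $N=\{X\in\mathbb{R}^{p\times p}:\ X_{ii}=X_{jj}\text{ whenever } s_i=s_j;\ X_{ij}=X_{kl}\text{ whenever } j\in\mathcal{N}_i,\ l\in\mathcal{N}_k,\ s_i=s_k,\ s_j=s_l;\ X_{ij}=0\text{ whenever } i\neq j \text{ and } j\notin\mathcal{N}_i\}$. *)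

From HB Require Import structures.
From mathcomp Require Import all_boot all_order all_algebra.
From mathcomp Require Import all_classical all_reals all_analysis.
Set Implicit Arguments. Unset Strict Implicit. Unset Printing Implicit Defensive.
Import Order.TTheory GRing.Theory Num.Theory.
Local Open Scope ring_scope.

Section Defs.
Variable R : realType.

Definition symmx p (A : 'M[R]_p) : Prop := A^T = A.

Definition psdmx p (A : 'M[R]_p) : Prop :=
  symmx A /\ forall v : 'cV[R]_p, 0 <= (v^T *m A *m v) 0 0.

Definition pdmx p (A : 'M[R]_p) : Prop :=
  symmx A /\ forall v : 'cV[R]_p, v != 0 -> 0 < (v^T *m A *m v) 0 0.

Definition frob p (A : 'M[R]_p) : R :=
  Num.sqrt (\sum_(i < p) \sum_(j < p) A i j ^+ 2).

Definition setM p (eps : R) (X : 'M[R]_p) : Prop :=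
  symmx X /\ psdmx (X - eps%:M).

(* N, given node types s and neighbour sets Nb *)
Definition setN p (T : eqType) (s : 'I_p -> T) (Nb : 'I_p -> {set 'I_p})
  (X : 'M[R]_p) : Prop :=
  [/\ (forall i j, s i = s j -> X i i = X j j),
      (forall i j k l, j \in Nb i -> l \in Nb k -> s i = s k -> s j = s l ->
          X i j = X k l)
    & (forall i j, i != j -> j \notin Nb i -> X i j = 0)].

Definition Pgamma p (nu gamma : R) (B S X Y : 'M[R]_p) : R :=
  - (nu - p%:R) * ln (\det X) + \tr ((invmx B + S) *m X)
  + gamma / 2 * frob (X - Y) ^+ 2.

End Defs.

From HB Require Import structures.
From mathcomp Require Import all_boot all_order all_algebra.
From mathcomp Require Import all_classical all_reals all_analysis.
From mathcomp Require Import ring lra.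
Import Order.TTheory GRing.Theory Num.Theory.
Import numFieldNormedType.Exports.
Local Open Scope ring_scope.
Set Implicit Arguments. Unset Strict Implicit. Unset Printing Implicit Defensive.

(** Existence: on [M] the eigenvalues of [X] are at least [eps], so [det X >= eps ^ p]
    keeps [log det] away from its singularity and the objective is continuous on the
    closed set [M x N].  It is also coercive: [tr((B^-1 + S) X) >= c tr X] for some
    [c > 0], each eigenvalue satisfies [k log d <= c d / 2 + const], and [tr X] bounds
    every entry of [X], after which the Frobenius term bounds [Y].  A sublevel set is
    therefore compact and contains a minimiser.

    Uniqueness: the objective is strictly midpoint convex on [M x N].  The trace term is
    linear, [|X - Y|^2] is convex and strictly so in [X - Y], and [- log det] is strictly
    convex: diagonalising two positive definite matrices simultaneously as [I] and
    [diag m] reduces [det X1 det X2 < det ((X1 + X2) / 2) ^ 2] to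
    [m_i <= ((1 + m_i) / 2) ^ 2], strict unless [m_i = 1].

    The spectral theorem for real symmetric matrices, used throughout, is proved by
    taking a minimiser of the Rayleigh quotient on the unit sphere as an eigenvector and
    deflating with a Householder reflection. *)

Section QuadraticForm.
Variable R : realFieldType.

Definition bform n (A : 'M[R]_n) (u v : 'rV[R]_n) : R := (u *m A *m v^T) 0 0.
Definition qform n (A : 'M[R]_n) (u : 'rV[R]_n) : R := bform A u u.
Definition sqnorm n (u : 'rV[R]_n) : R := (u *m u^T) 0 0.

Lemma bformE n (A : 'M[R]_n) u v :
  bform A u v = \sum_i \sum_j u 0 i * A i j * v 0 j.
Proof.
rewrite /bform mxE; under eq_bigr => j _ do rewrite !mxE big_distrl /=.
by rewrite exchange_big.
Qed.

Lemma bformDr n (A : 'M[R]_n) u v w : bform A u (v + w) = bform A u v + bform A u w.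
Proof. by rewrite /bform linearD /= mulmxDr mxE. Qed.

Lemma bformDl n (A : 'M[R]_n) u v w : bform A (u + v) w = bform A u w + bform A v w.
Proof. by rewrite /bform !mulmxDl mxE. Qed.

Lemma bformZr n (A : 'M[R]_n) a u v : bform A u (a *: v) = a * bform A u v.
Proof. by rewrite /bform linearZ /= -scalemxAr mxE. Qed.

Lemma bformZl n (A : 'M[R]_n) a u v : bform A (a *: u) v = a * bform A u v.
Proof. by rewrite /bform -!scalemxAl mxE. Qed.

Lemma bformNr n (A : 'M[R]_n) u v : bform A u (- v) = - bform A u v.
Proof. by rewrite -scaleN1r bformZr mulN1r. Qed.

Lemma bformC n (A : 'M[R]_n) u v : A^T = A -> bform A u v = bform A v u.
Proof.
move=> sA; rewrite /bform; have <- : (u *m A *m v^T)^T = v *m A *m u^T.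
  by rewrite !trmx_mul trmxK sA mulmxA.
by rewrite [in RHS]mxE.
Qed.

Lemma qformD n (A : 'M[R]_n) u v : A^T = A ->
  qform A (u + v) = qform A u + 2 * bform A u v + qform A v.
Proof. by move=> sA; rewrite /qform bformDl !bformDr (bformC v u sA); ring. Qed.

Lemma qformZ n (A : 'M[R]_n) a u : qform A (a *: u) = a ^+ 2 * qform A u.
Proof. by rewrite /qform bformZl bformZr mulrA expr2. Qed.

Lemma qformN n (A : 'M[R]_n) u : qform A (- u) = qform A u.
Proof. by rewrite -scaleN1r qformZ sqrrN expr1n mul1r. Qed.

Lemma qform0 n (A : 'M[R]_n) : qform A 0 = 0.
Proof. by rewrite -(scale0r 0) qformZ expr0n mul0r. Qed.

Lemma qformDmx n (A B : 'M[R]_n) u : qform (A + B) u = qform A u + qform B u.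
Proof. by rewrite /qform /bform mulmxDr mulmxDl mxE. Qed.

Lemma qformZmx n a (A : 'M[R]_n) u : qform (a *: A) u = a * qform A u.
Proof. by rewrite /qform /bform -scalemxAr -scalemxAl mxE. Qed.

Lemma qform1 n (u : 'rV[R]_n) : qform 1%:M u = sqnorm u.
Proof. by rewrite /qform /bform mulmx1. Qed.

Lemma qformBscalar n (A : 'M[R]_n) a u :
  qform (A - a%:M) u = qform A u - a * sqnorm u.
Proof. by rewrite qformDmx -scaleN1r -scalemx1 !qformZmx qform1 mulN1r. Qed.

Lemma qform_trmx n (A : 'M[R]_n) (v : 'cV[R]_n) : (v^T *m A *m v) 0 0 = qform A v^T.
Proof. by rewrite /qform /bform trmxK. Qed.

Lemma qform_mulmx n (W A : 'M[R]_n) u : qform (W *m A *m W^T) u = qform A (u *m W).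
Proof. by rewrite /qform /bform trmx_mul !mulmxA. Qed.

Lemma qform_diag n (d : 'rV[R]_n) u :
  qform (diag_mx d) u = \sum_i d 0 i * u 0 i ^+ 2.
Proof.
rewrite /qform bformE; apply: eq_bigr => i _; rewrite (bigD1 i) //= big1 ?addr0.
  by rewrite mxE eqxx mulr1n; ring.
by move=> j /negbTE ji; rewrite mxE eq_sym ji mulr0n mulr0 mul0r.
Qed.

Lemma qform_diag_delta n (d : 'rV[R]_n) i : qform (diag_mx d) 'e_i = d 0 i.
Proof.
rewrite qform_diag (bigD1 i) //= big1 ?addr0 => [|j ji].
  by rewrite mxE !eqxx /= expr1n mulr1.
by rewrite mxE eqxx andTb (negbTE ji) /= expr0n mulr0.
Qed.

Lemma sqnormE n (u : 'rV[R]_n) : sqnorm u = \sum_i u 0 i ^+ 2.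
Proof. by rewrite /sqnorm mxE; apply: eq_bigr => i _; rewrite mxE expr2. Qed.

Lemma sqnormZ n a (u : 'rV[R]_n) : sqnorm (a *: u) = a ^+ 2 * sqnorm u.
Proof. by rewrite -!qform1 qformZ. Qed.

Lemma sqnorm_ge0 n (u : 'rV[R]_n) : 0 <= sqnorm u.
Proof. by rewrite sqnormE sumr_ge0 // => i _; rewrite sqr_ge0. Qed.

Lemma sqr_coord_le_sqnorm n (u : 'rV[R]_n) i : u 0 i ^+ 2 <= sqnorm u.
Proof.
by rewrite sqnormE (bigD1 i) //= lerDl sumr_ge0 // => j _; rewrite sqr_ge0.
Qed.

Lemma sqnorm_eq0 n (u : 'rV[R]_n) : (sqnorm u == 0) = (u == 0).
Proof.
apply/eqP/eqP => [u0|->]; last by rewrite /sqnorm mul0mx mxE.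
apply/rowP => i; rewrite mxE; apply/eqP; rewrite -sqrf_eq0 eq_le sqr_ge0 andbT.
by rewrite -u0 sqr_coord_le_sqnorm.
Qed.

Lemma sqnorm_gt0 n (u : 'rV[R]_n) : (0 < sqnorm u) = (u != 0).
Proof. by rewrite lt_def sqnorm_ge0 sqnorm_eq0 andbT. Qed.

Lemma sqnorm_delta n (i : 'I_n) : sqnorm ('e_i : 'rV[R]_n) = 1.
Proof. by rewrite /sqnorm trmx_delta mul_delta_mx mxE !eqxx. Qed.

Lemma psd_qform_kernel n (A : 'M[R]_n) u : A^T = A -> (forall w, 0 <= qform A w) ->
  qform A u = 0 -> u *m A = 0.
Proof.
(* [qform A (u - t *: (u *m A))] is [- 2 t |u A|^2 + O(t^2)], negative for small [t > 0]. *)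
move=> sA psdA Au0; set v := u *m A; apply/eqP; rewrite -sqnorm_eq0.
have uv : bform A u v = sqnorm v by [].
set a := sqnorm v; set b := qform A v; set t := a / (b + 1).
have b0 : 0 <= b by exact: psdA.
have tb : t * (b + 1) = a by rewrite /t mulfVK // gt_eqF // ltr_wpDl.
have := psdA (u + (- t) *: v); rewrite qformD // Au0 qformZ bformZr uv -/b => h.
have : t ^+ 2 * (b + 2) <= 0.
  by rewrite -oppr_ge0; apply: le_trans h _; rewrite -[X in - t * X]tb; lra.
move=> h2; have t0 : t = 0.
  by apply/eqP; rewrite -sqrf_eq0 eq_le sqr_ge0 andbT; nra.
by rewrite -tb t0 mul0r.
Qed.

End QuadraticForm.

Section PsdMatrices.
Variable R : realFieldType.

Lemma bform_delta n (X : 'M[R]_n) i j : bform X 'e_i 'e_j = X i j.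
Proof. by rewrite /bform -rowE trmx_delta -colE !mxE. Qed.

Lemma psd_trace_ge0 n (X : 'M[R]_n) : (forall u, 0 <= qform X u) -> 0 <= \tr X.
Proof. by move=> psdX; apply: sumr_ge0 => i _; rewrite -bform_delta psdX. Qed.

Lemma psd_abs_le_trace n (X : 'M[R]_n) i j : X^T = X ->
  (forall u, 0 <= qform X u) -> `|X i j| <= \tr X.
Proof.
move=> sX psdX; have Xkk k : X k k = qform X 'e_k by rewrite /qform bform_delta.
have diag_le k : X k k <= \tr X.
  by rewrite /mxtrace (bigD1 k) //= lerDl sumr_ge0 // => l _; rewrite Xkk.
have := psdX ('e_i + 'e_j); have := psdX ('e_i - 'e_j).
rewrite !qformD // qformN bformNr !bform_delta -!Xkk => Xm Xp.
have := diag_le i; have := diag_le j; rewrite ler_norml; lra.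
Qed.

Lemma pd_unitmx n (A : 'M[R]_n) :
  (forall u, u != 0 -> 0 < qform A u) -> A \in unitmx.
Proof.
move=> pdA; rewrite unitmxE unitfE; apply/negP => /det0P [v v0 vA].
by have := pdA v v0; rewrite /qform /bform vA mul0mx mxE ltxx.
Qed.

Lemma pd_invmx n (A : 'M[R]_n) : A^T = A ->
  (forall u, u != 0 -> 0 < qform A u) -> forall u, u != 0 -> 0 < qform (invmx A) u.
Proof.
move=> sA pdA u u0; have Au := pd_unitmx pdA.
have -> : invmx A = invmx A *m A *m (invmx A)^T by rewrite mulVmx // mul1mx trmx_inv sA.
rewrite qform_mulmx pdA //; apply: contra u0 => /eqP uA.
by rewrite -[u](mulmxKV Au) uA mul0mx.
Qed.

End PsdMatrices.

Section Reflection.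
Variable R : realFieldType.

Lemma reflection_row0 n (v : 'rV[R]_n.+1) : sqnorm v = 1 ->
  exists H : 'M[R]_n.+1, [/\ H^T = H, H *m H = 1%:M & row 0 H = v].
Proof.
move=> v1; have [->|ve0] := eqVneq v 'e_0.
  by exists 1%:M; rewrite tr_scalar_mx mulmx1 rowE mulmx1.
(* The Householder reflection [1 - 2 u^T u / |u|^2] with [u = e_0 - v]. *)
set u := 'e_0 - v; set a := sqnorm u; set c := 2 / a.
have a0 : a != 0 by rewrite sqnorm_eq0 subr_eq0 eq_sym.
set b := bform 1%:M 'e_0 v.
have ea : a = 2 * (1 - b).
  rewrite /a -qform1 qformD ?tr_scalar_mx // qformN bformNr !qform1 sqnorm_delta v1 -/b.
  by ring.
have eu : (('e_0 : 'rV[R]_n.+1) *m u^T) 0 0 = 1 - b.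
  have -> : (('e_0 : 'rV[R]_n.+1) *m u^T) 0 0 = bform 1%:M 'e_0 u.
    by rewrite /bform mulmx1.
  by rewrite bformDr bformNr -/(qform 1%:M 'e_0) qform1 sqnorm_delta.
set X := u^T *m u.
have XX : X *m X = a *: X.
  rewrite /X mulmxA -[u^T *m u *m u^T]mulmxA (mx11_scalar (u *m u^T)).
  by rewrite mul_mx_scalar -scalemxAl.
exists (1%:M - c *: X); split.
- by rewrite linearB /= linearZ /= tr_scalar_mx /X trmx_mul trmxK.
- rewrite mulmxBl mul1mx mulmxBr mulmx1 -scalemxAl -scalemxAr XX !scalerA.
  have -> : c * c * a = c + c by rewrite /c; field.
  by rewrite scalerDl opprB addrK subrK.
- rewrite rowE mulmxBr mulmx1 -scalemxAr /X mulmxA.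
  rewrite (mx11_scalar ('e_0 *m u^T)) mul_scalar_mx scalerA eu.
  have b1 : 1 - b != 0 by apply: contra a0; rewrite ea => /eqP ->; rewrite mulr0.
  have -> : c * (1 - b) = 1 by rewrite /c ea; field.
  by rewrite scale1r /u opprB addrC subrK.
Qed.

Lemma symmx_deflate n (A H : 'M[R]_(1 + n)) lam :
  A^T = A -> H^T = H -> H *m H = 1%:M -> row 0 H *m A = lam *: row 0 H ->
  exists2 A' : 'M[R]_n, A'^T = A' & H *m A *m H = block_mx lam%:M 0 0 A'.
Proof.
move=> sA sH HH eigA; set A1 := H *m A *m H.
have sA1 : A1^T = A1 by rewrite /A1 !trmx_mul sH sA mulmxA.
have r0 : row 0 A1 = lam *: 'e_0.
  by rewrite /A1 !row_mul eigA -scalemxAl -row_mul HH rowE mulmx1.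
clearbody A1.
have row0 j : A1 (lshift n 0) j = lam * ('e_0 : 'rV[R]_(1 + n)) 0 j.
  have := congr1 (fun r : 'rV[R]_(1 + n) => r 0 j) r0; rewrite !mxE => <-.
  by congr (A1 _ _); apply: val_inj.
have ur : ursubmx A1 = 0.
  by apply/matrixP => i j; rewrite (ord1 i) !mxE row0 mxE /= mulr0.
have dl : dlsubmx A1 = 0 by rewrite -[A1]sA1 -trmx_ursub ur trmx0.
have ul : ulsubmx A1 = lam%:M.
  apply/matrixP => i j; rewrite (ord1 i) (ord1 j) !mxE row0 mxE /=.
  by rewrite mulr1.
exists (drsubmx A1); first by rewrite trmx_drsub sA1.
by rewrite -{1}[A1]submxK ul ur dl.
Qed.

End Reflection.

Section SpectralForm.
Variables (R : realFieldType) (n : nat) (Q : 'M[R]_n) (d : 'rV[R]_n).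
Hypothesis Qo : Q *m Q^T = 1%:M.
Local Notation A := (Q^T *m diag_mx d *m Q).

Lemma row_orthomx_mul_tr i : row i Q *m Q^T = 'e_i.
Proof. by rewrite rowE -mulmxA Qo mulmx1. Qed.

Lemma sqnorm_row_orthomx i : sqnorm (row i Q) = 1.
Proof.
by rewrite /sqnorm {2}rowE trmx_mul mulmxA row_orthomx_mul_tr -/(sqnorm _) sqnorm_delta.
Qed.

Lemma qform_spectral_row i : qform A (row i Q) = d 0 i.
Proof. by rewrite -{2}[Q]trmxK qform_mulmx row_orthomx_mul_tr qform_diag_delta. Qed.

Lemma det_spectral : \det A = \prod_i d 0 i.
Proof. by rewrite !det_mulmx det_diag mulrAC -det_mulmx (mulmx1C Qo) det1 mul1r. Qed.

Lemma trace_spectral : \tr A = \sum_i d 0 i.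
Proof. by rewrite mxtrace_mulC mulmxA Qo mul1mx mxtrace_diag. Qed.

Lemma trace_mul_spectral (C : 'M[R]_n) :
  \tr (C *m A) = \sum_i d 0 i * qform C (row i Q).
Proof.
rewrite !mulmxA mxtrace_mulC !mulmxA; apply: eq_bigr => i _.
rewrite mul_mx_diag mxE mulrC; congr (_ * _).
rewrite /qform bformE mxE; under eq_bigr => k _ do rewrite !mxE big_distrl /=.
by rewrite exchange_big; apply: eq_bigr => j _; apply: eq_bigr => k _; rewrite !mxE.
Qed.

End SpectralForm.

Lemma det_congruence (R : comRingType) n (W X : 'M[R]_n) :
  \det (W *m X *m W^T) = \det W ^+ 2 * \det X.
Proof. by rewrite !det_mulmx det_tr mulrAC expr2. Qed.

Lemma prod_lt_sqr_midpoint (R : realFieldType) (I : finType) (m : I -> R) j :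
  (forall i, 0 < m i) -> m j != 1 ->
  \prod_i m i < (\prod_i (2^-1 * (1 + m i))) ^+ 2.
Proof.
move=> m0 mj; rewrite -prodrXl (bigD1 j) //= [ltRHS](bigD1 j) //=.
have amgm i : (2^-1 * (1 + m i)) ^+ 2 - m i = (2^-1 * (m i - 1)) ^+ 2 by field.
have le_amgm i : m i <= (2^-1 * (1 + m i)) ^+ 2 by rewrite -subr_ge0 amgm sqr_ge0.
have lt_amgm : m j < (2^-1 * (1 + m j)) ^+ 2.
  rewrite -subr_gt0 amgm exprn_even_gt0 // mulf_neq0 ?invr_eq0 ?pnatr_eq0 //.
  by rewrite subr_eq0.
have le_rest : \prod_(i | i != j) m i <= \prod_(i | i != j) (2^-1 * (1 + m i)) ^+ 2.
  by apply: ler_prod => i _; rewrite le_amgm ltW.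
have rest0 : 0 < \prod_(i | i != j) m i by apply: prodr_gt0.
apply: (le_lt_trans (y := m j * \prod_(i | i != j) (2^-1 * (1 + m i)) ^+ 2)).
  by rewrite ler_pM2l.
by rewrite ltr_pM2r // (lt_le_trans rest0).
Qed.

Section RealContinuity.
Variable R : realType.

Lemma continuous_mul (T : topologicalType) (f g : T -> R) :
  continuous f -> continuous g -> continuous (fun x => f x * g x).
Proof. by move=> cf cg x; exact: (continuousM (cf x) (cg x)). Qed.

Lemma continuous_add (T : topologicalType) (f g : T -> R) :
  continuous f -> continuous g -> continuous (fun x => f x + g x).
Proof. by move=> cf cg x; exact: (@continuousD _ R^o _ f g x (cf x) (cg x)). Qed.

Lemma continuous_sub (T : topologicalType) (f g : T -> R) :
  continuous f -> continuous g -> continuous (fun x => f x - g x).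
Proof. by move=> cf cg x; exact: (@continuousB _ R^o _ f g x (cf x) (cg x)). Qed.

Lemma continuous_sum (T : topologicalType) (I : finType) (f : I -> T -> R) :
  (forall i, continuous (f i)) -> continuous (fun x => \sum_i f i x).
Proof.
move=> cf x; rewrite /index_enum; elim: (Finite.enum I) => [|i s IH].
  by under eq_fun do rewrite big_nil; exact: cst_continuous.
under eq_fun do rewrite big_cons.
exact: (@continuousD _ R^o _ (f i) _ x (cf i x) IH).
Qed.

Lemma continuous_prod (T : topologicalType) (I : finType) (f : I -> T -> R) :
  (forall i, continuous (f i)) -> continuous (fun x => \prod_i f i x).
Proof.
move=> cf x; rewrite /index_enum; elim: (Finite.enum I) => [|i s IH].
  by under eq_fun do rewrite big_nil; exact: cst_continuous.
under eq_fun do rewrite big_cons.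
exact: (continuousM (cf i x) IH).
Qed.

End RealContinuity.

Section UnitSphere.
Variable R : realType.
Local Open Scope classical_set_scope.

Lemma continuous_qform n (A : 'M[R]_n) : continuous (qform A).
Proof.
rewrite (_ : qform A = fun u => \sum_i \sum_j u 0 i * A i j * u 0 j).
  apply: continuous_sum => i; apply: continuous_sum => j.
  apply: continuous_mul; last exact: coord_continuous.
  by apply: continuous_mul; [exact: coord_continuous | exact: cst_continuous].
by apply: funext => u; rewrite /qform bformE.
Qed.

Lemma compact_unit_sphere n : compact [set u : 'rV[R]_n | sqnorm u = 1].
Proof.
apply: bounded_closed_compact.
  exists 1; split; first exact: num_real.
  move=> M M1 u /= u1; change (mx_norm u <= M); rewrite mx_normrE.
  apply: bigmax_le => [|[i j] _ /=]; first exact: le_trans (ltW M1).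
  rewrite (ord1 i); apply: le_trans (ltW M1).
  by rewrite -(expr_le1 (n := 2)) // real_normK ?num_real // -u1 sqr_coord_le_sqnorm.
rewrite (_ : [set u | _] = @sqnorm R n @^-1` [set 1]) //.
apply: closed_comp => [? _|]; last exact: closed_eq.
rewrite (_ : @sqnorm R n = qform 1%:M); first exact: continuous_qform.
by apply: funext => u; rewrite qform1.
Qed.

Lemma qform_sphere_min n (A : 'M[R]_n.+1) :
  exists2 v : 'rV[R]_n.+1, sqnorm v = 1 & forall w, qform A v * sqnorm w <= qform A w.
Proof.
have sphere0 : [set u : 'rV[R]_n.+1 | sqnorm u = 1] !=set0.
  by exists 'e_0; exact: sqnorm_delta.
have [v /set_mem /= v1 vmin] := EVT_min_rV sphere0 (@compact_unit_sphere _)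
  (continuous_subspaceT (@continuous_qform _ A)).
exists v => // w; have [->|w0] := eqVneq w 0.
  by rewrite qform0 -(scale0r 0) sqnormZ expr0n !mul0r mulr0.
have a0 : 0 < sqnorm w by rewrite sqnorm_gt0.
set r := Num.sqrt (sqnorm w).
have r2 : r ^+ 2 = sqnorm w by rewrite sqr_sqrtr // ltW.
have := vmin (r^-1 *: w); rewrite inE /= sqnormZ exprVn r2 mulVf ?gt_eqF //.
by rewrite qformZ exprVn r2 -ler_pdivlMr // mulrC => /(_ erefl).
Qed.

Lemma symmx_eigenvector n (A : 'M[R]_n.+1) : A^T = A ->
  exists2 v : 'rV[R]_n.+1, sqnorm v = 1 & exists lam, v *m A = lam *: v.
Proof.
(* For [lam] the minimum of the Rayleigh quotient, [A - lam] is psd and vanishes at [v]. *)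
move=> sA; have [v v1 vmin] := qform_sphere_min A; exists v => //.
exists (qform A v); apply/eqP; rewrite -subr_eq0 -mul_mx_scalar -mulmxBr.
apply/eqP/psd_qform_kernel => [|w|].
- by rewrite linearB /= tr_scalar_mx sA.
- by rewrite qformBscalar subr_ge0.
- by rewrite qformBscalar v1 mulr1 subrr.
Qed.

Lemma pd_qform_ge n (A : 'M[R]_n) : (forall u, u != 0 -> 0 < qform A u) ->
  exists2 c, 0 < c & forall u, c * sqnorm u <= qform A u.
Proof.
case: n A => [|n] A pdA.
  by exists 1 => // u; rewrite [u]thinmx0 qform0 /sqnorm mul0mx mxE mulr0.
have [v v1 vmin] := qform_sphere_min A; exists (qform A v) => //.
by apply: pdA; rewrite -sqnorm_gt0 v1.
Qed.

End UnitSphere.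

Theorem symmx_spectral (R : realType) n (A : 'M[R]_n) : A^T = A ->
  exists Q (d : 'rV[R]_n), Q *m Q^T = 1%:M /\ A = Q^T *m diag_mx d *m Q.
Proof.
elim: n A => [|n IH] A sA.
  by exists 1%:M, 0; rewrite tr_scalar_mx mulmx1 [A]thinmx0 [_ *m _]thinmx0.
have [v v1 [lam eigA]] := symmx_eigenvector sA.
have [H [sH HH Hv]] := reflection_row0 v1.
have eigH : row 0 H *m A = lam *: row 0 H by rewrite Hv.
have [A' sA' AH] := @symmx_deflate _ n A H lam sA sH HH eigH.
have [Q' [d' [Q'o eA']]] := IH A' sA'.
pose B : 'M[R]_(1 + n) := block_mx 1%:M 0 0 Q'.
have eB : B^T *m diag_mx (row_mx lam%:M d') *m B = block_mx lam%:M 0 0 A'.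
  rewrite /B tr_block_mx !trmx0 tr_scalar_mx diag_mx_row.
  have -> : diag_mx (lam%:M : 'rV[R]_1) = lam%:M.
    by apply/matrixP => i j; rewrite (ord1 i) (ord1 j) !mxE.
  by rewrite !mulmx_block !mulmx0 !mul0mx !addr0 !add0r mul1mx mulmx1 !mul0mx eA'.
suff : exists Q (d : 'rV[R]_(1 + n)),
    Q *m Q^T = 1%:M /\ (A : 'M[R]_(1 + n)) = Q^T *m diag_mx d *m Q by [].
exists (B *m H), (row_mx lam%:M d'); split.
  rewrite trmx_mul sH mulmxA -(mulmxA B) HH mulmx1 /B tr_block_mx mulmx_block.
  by rewrite !trmx0 !mulmx0 !mul0mx !addr0 !add0r tr_scalar_mx mulmx1 Q'o -scalar_mx_block.
have -> : A = H *m (H *m A *m H) *m H by rewrite !mulmxA HH mul1mx -mulmxA HH mulmx1.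
by rewrite AH -eB trmx_mul sH !mulmxA.
Qed.

Lemma symmx_spectral_ge (R : realType) n (A : 'M[R]_n) e : A^T = A ->
  (forall u, e * sqnorm u <= qform A u) ->
  exists Q (d : 'rV[R]_n),
    [/\ Q *m Q^T = 1%:M, A = Q^T *m diag_mx d *m Q & forall i, e <= d 0 i].
Proof.
move=> sA Ae; have [Q [d [Qo eA]]] := symmx_spectral sA.
exists Q, d; split => // i.
by rewrite -(qform_spectral_row d Qo) -eA -[e]mulr1 -(sqnorm_row_orthomx Qo i).
Qed.

Section DetMidpoint.
Variables (R : realType) (n : nat).

Lemma simultaneous_diag (X1 X2 : 'M[R]_n) : X1^T = X1 -> X2^T = X2 ->
  (forall u, u != 0 -> 0 < qform X1 u) ->
  exists W (m : 'rV[R]_n),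
    [/\ W \in unitmx, W *m X1 *m W^T = 1%:M & W *m X2 *m W^T = diag_mx m].
Proof.
move=> sX1 sX2 pdX1; have [c c0 X1c] := pd_qform_ge pdX1.
have [Q [d [Qo eX1 dc]]] := symmx_spectral_ge sX1 X1c.
have d0 i : 0 < d 0 i by apply: lt_le_trans (dc i).
pose L := diag_mx (\row_i (Num.sqrt (d 0 i))^-1) *m Q.
have LX1 : L *m X1 *m L^T = 1%:M.
  rewrite /L eX1 trmx_mul tr_diag_mx !mulmxA -(mulmxA _ Q) Qo mulmx1.
  rewrite -(mulmxA _ Q) Qo mulmx1 !mulmx_diag; apply/matrixP => i j; rewrite !mxE.
  have sd0 : Num.sqrt (d 0 i) != 0 by rewrite gt_eqF // sqrtr_gt0.
  by rewrite -{2}(sqr_sqrtr (ltW (d0 i))) [_ * _ * _](_ : _ = 1) //; field.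
clearbody L.
have sE : (L *m X2 *m L^T)^T = L *m X2 *m L^T by rewrite !trmx_mul trmxK sX2 mulmxA.
have [V [m [Vo eE]]] := symmx_spectral sE.
have WX X : (V *m L) *m X *m (V *m L)^T = V *m (L *m X *m L^T) *m V^T.
  by rewrite trmx_mul !mulmxA.
have WX1 : (V *m L) *m X1 *m (V *m L)^T = 1%:M by rewrite WX LX1 mulmx1 Vo.
exists (V *m L), m; split => //.
  by have [] := mulmx1_unit (etrans (mulmxA _ _ _) WX1).
by rewrite WX eE !mulmxA Vo mul1mx -mulmxA Vo mulmx1.
Qed.

Lemma det_midpoint_lt (X1 X2 : 'M[R]_n) : X1^T = X1 -> X2^T = X2 ->
  (forall u, u != 0 -> 0 < qform X1 u) -> (forall u, u != 0 -> 0 < qform X2 u) ->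
  X1 != X2 -> \det X1 * \det X2 < \det (2^-1 *: (X1 + X2)) ^+ 2.
Proof.
move=> sX1 sX2 pdX1 pdX2 X12.
have [W [m [Wu WX1 WX2]]] := simultaneous_diag sX1 sX2 pdX1.
have m0 i : 0 < m 0 i.
  rewrite -qform_diag_delta -WX2 qform_mulmx pdX2 //.
  have : ('e_i : 'rV[R]_n) *m W *m invmx W != 0.
    by rewrite (mulmxK Wu) -sqnorm_eq0 sqnorm_delta oner_eq0.
  by apply: contraNneq => ->; rewrite mul0mx.
have WXK X : invmx W *m (W *m X *m W^T) *m invmx W^T = X.
  by rewrite !mulmxA mulVmx // mul1mx -mulmxA mulmxV ?unitmx_tr // mulmx1.
have [j mj] : exists j, m 0 j != 1.
  have [j mj|m1] := pickP (fun j => m 0 j != 1); first by exists j.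
  move: X12; rewrite -[X1]WXK -[X2]WXK WX1 WX2 (_ : diag_mx m = 1%:M) ?eqxx //.
  by apply/matrixP => i k; rewrite !mxE (eqP (negbFE (m1 i))).
have WXm : W *m (2^-1 *: (X1 + X2)) *m W^T = diag_mx (\row_i (2^-1 * (1 + m 0 i))).
  rewrite -scalemxAr -scalemxAl mulmxDr mulmxDl WX1 WX2.
  by apply/matrixP => i k; rewrite !mxE; case: (i == k); rewrite /= ?addr0 ?add0r ?mulr0.
set w := \det W ^+ 2.
have w0 : 0 < w by rewrite exprn_even_gt0 // -unitfE -unitmxE.
have e1 : w * \det X1 = 1 by rewrite -det_congruence WX1 det1.
rewrite -(ltr_pM2l (exprn_gt0 2 w0)) -exprMn expr2 mulrACA e1 mul1r.
rewrite -!det_congruence WX2 WXm !det_diag.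
under [X in _ < X ^+ 2]eq_bigr do rewrite mxE.
exact: (@prod_lt_sqr_midpoint _ _ (fun i => m 0 i) j m0 mj).
Qed.

End DetMidpoint.

Lemma ln_prod (R : realType) (I : finType) (F : I -> R) : (forall i, 0 < F i) ->
  ln (\prod_i F i) = \sum_i ln (F i).
Proof.
move=> F0; suff [] : 0 < \prod_i F i /\ ln (\prod_i F i) = \sum_i ln (F i) by [].
elim/big_rec2: _ => [|i x y _ [x0 <-]]; first by rewrite ln1.
by rewrite mulr_gt0 // lnM // posrE.
Qed.

Lemma mul_ln_le (R : realType) (k c x : R) : 0 < k -> 0 < c -> 0 < x ->
  k * ln x <= c / 2 * x + k * ln (2 * k / c).
Proof.
move=> k0 c0 x0; set y := c / (2 * k) * x.
have q0 : 0 < 2 * k / c by rewrite divr_gt0 // mulr_gt0.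
have y0 : 0 < y by rewrite mulr_gt0 // divr_gt0 // mulr_gt0.
have ln_y : ln y <= y - 1.
  by have := @le_ln1Dx R (y - 1); rewrite addrCA subrr addr0; apply; lra.
have -> : x = y * (2 * k / c) by rewrite /y; field; rewrite ?gt_eqF.
rewrite lnM ?posrE // mulrDr lerD2r.
have -> : c / 2 * (y * (2 * k / c)) = k * y by field; rewrite gt_eqF.
by rewrite ler_pM2l //; lra.
Qed.

Section SpectralBounds.
Variables (R : realType) (n : nat).

Lemma trace_mul_ge (C X : 'M[R]_n) c : X^T = X -> (forall u, 0 <= qform X u) ->
  (forall u, c * sqnorm u <= qform C u) -> c * \tr X <= \tr (C *m X).
Proof.
move=> sX psdX Cc.
have [Q [d [Qo -> d0]]] : exists Q (d : 'rV[R]_n),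
    [/\ Q *m Q^T = 1%:M, X = Q^T *m diag_mx d *m Q & forall i, 0 <= d 0 i].
  by apply: symmx_spectral_ge => // u; rewrite mul0r.
rewrite trace_mul_spectral // trace_spectral // mulr_sumr; apply: ler_sum => i _.
by rewrite mulrC ler_wpM2l // -[c]mulr1 -(sqnorm_row_orthomx Qo i).
Qed.

Lemma ln_det_le_trace (X : 'M[R]_n) k c : 0 < k -> 0 < c -> X^T = X ->
  (forall u, u != 0 -> 0 < qform X u) ->
  k * ln (\det X) <= c / 2 * \tr X + n%:R * (k * ln (2 * k / c)).
Proof.
move=> k0 c0 sX pdX; have [e e0 Xe] := pd_qform_ge pdX.
have [Q [d [Qo -> de]]] := symmx_spectral_ge sX Xe.
have d0 i : 0 < d 0 i by apply: lt_le_trans (de i).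
rewrite det_spectral // trace_spectral // ln_prod // !mulr_sumr.
set K := k * ln (2 * k / c).
have -> : n%:R * K = \sum_(i < n) K by rewrite sumr_const card_ord mulr_natl.
rewrite -big_split /=.
by apply: ler_sum => i _; exact: mul_ln_le.
Qed.

End SpectralBounds.

Section ClosedSets.
Variables (R : realType) (T : topologicalType).
Local Open Scope classical_set_scope.

Lemma closed_ge0_fun (f : T -> R) : continuous f -> closed [set x | 0 <= f x].
Proof.
have -> : [set x | 0 <= f x] = f @^-1` [set x | 0 <= x] by [].
by move/continuous_closedP; apply; exact: closed_ge.
Qed.

Lemma closed_le_fun (f : T -> R) c : continuous f -> closed [set x | f x <= c].
Proof.
have -> : [set x | f x <= c] = f @^-1` [set x | x <= c] by [].
by move/continuous_closedP; apply; exact: closed_le.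
Qed.

Lemma closed_eq_fun (f g : T -> R) : continuous f -> continuous g ->
  closed [set x | f x = g x].
Proof.
move=> cf cg; rewrite (_ : [set x | _] = (fun x => f x - g x) @^-1` [set 0]).
  by apply: (continuous_closedP _).1; [exact: continuous_sub | exact: closed_eq].
apply/seteqP; split => x /=; first by move=> ->; rewrite subrr.
by move/eqP; rewrite subr_eq0 => /eqP.
Qed.

Lemma closed_forall (I : Type) (A : I -> set T) :
  (forall i, closed (A i)) -> closed [set x | forall i, A i x].
Proof.
move=> cA; rewrite (_ : [set x | _] = \bigcap_(i in setT) A i).
  by apply: closed_bigI => i _; exact: cA.
by apply/seteqP; split => x /= Ax i //; exact: Ax.
Qed.

Lemma closed_implies (P : Prop) (A : set T) : closed A -> closed [set x | P -> A x].
Proof.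
move=> cA; have [HP|nP] := pselect P.
  by rewrite (_ : [set x | _] = A) //; apply/seteqP; split => x /=; [apply | move=> ? _].
by rewrite (_ : [set x | _] = setT) ?closedT //; apply/seteqP; split => x // _ /nP.
Qed.

End ClosedSets.

Section EntrywiseContinuous.
Variables (R : realType) (T : topologicalType) (n : nat) (F : T -> 'M[R]_n).
Hypothesis cF : forall i j, continuous (fun t => F t i j).
Local Open Scope classical_set_scope.

Lemma continuous_det : continuous (fun t => \det (F t)).
Proof.
apply: continuous_sum => sigma; apply: continuous_mul; first exact: cst_continuous.
by apply: continuous_prod => i; exact: cF.
Qed.

Lemma closed_symmx : closed [set t | symmx (F t)].
Proof.
rewrite (_ : [set t | _] = [set t | forall i j, F t j i = F t i j]).
  by do 2!apply: closed_forall => ?; exact: closed_eq_fun.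
apply/seteqP; split => t /= => [sF i j | sF]; first by rewrite -[in LHS]sF mxE.
by apply/matrixP => i j; rewrite mxE sF.
Qed.

Lemma closed_psdmx : closed [set t | psdmx (F t)].
Proof.
apply: closedI; first exact: closed_symmx.
apply: closed_forall => v; apply: closed_ge0_fun.
rewrite (_ : (fun t => _) = fun t => \sum_i \sum_j v^T 0 i * F t i j * v^T 0 j).
  apply: continuous_sum => i; apply: continuous_sum => j.
  apply: continuous_mul; last exact: cst_continuous.
  by apply: continuous_mul; [exact: cst_continuous | exact: cF].
by apply: funext => t; rewrite qform_trmx /qform bformE.
Qed.

Lemma closed_setN (U : eqType) (s : 'I_n -> U) (Nb : 'I_n -> {set 'I_n}) :
  closed [set t | setN s Nb (F t)].
Proof.
rewrite (_ : [set t | _] = [set t | forall i j, s i = s j -> F t i i = F t j j] `&`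
  ([set t | forall i j k l, j \in Nb i -> l \in Nb k -> s i = s k -> s j = s l ->
     F t i j = F t k l] `&`
   [set t | forall i j, i != j -> j \notin Nb i -> F t i j = 0])).
  apply: closedI; last apply: closedI.
  - by do 2!apply: closed_forall => ?; apply: closed_implies; exact: closed_eq_fun.
  - do 4!apply: closed_forall => ?; do 4!apply: closed_implies.
    exact: closed_eq_fun.
  - do 2!apply: closed_forall => ?; do 2!apply: closed_implies.
    by apply: closed_eq_fun => //; exact: cst_continuous.
by apply/seteqP; split => t /=; [case | case=> ? []].
Qed.

End EntrywiseContinuous.

Lemma closed_setM (R : realType) (T : topologicalType) n (F : T -> 'M[R]_n) eps :
  (forall i j, continuous (fun t => F t i j)) -> closed [set t | setM eps (F t)].
Proof.
move=> cF; apply: closedI; first exact: closed_symmx.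
apply: (@closed_psdmx _ _ _ (fun t => F t - eps%:M)) => i j.
rewrite (_ : (fun t => _) = fun t => F t i j - (eps%:M : 'M[R]_n) i j).
  by apply: continuous_sub; [exact: cF | exact: cst_continuous].
by apply: funext => t; rewrite !mxE.
Qed.

Section Frobenius.
Variable R : realType.

Lemma frob_sqrE m (A : 'M[R]_m) : frob A ^+ 2 = \sum_i \sum_j A i j ^+ 2.
Proof.
by rewrite /frob sqr_sqrtr // sumr_ge0 // => i _; rewrite sumr_ge0 // => j _; rewrite sqr_ge0.
Qed.

Lemma frob_sqr_mxvec m (A : 'M[R]_m) : frob A ^+ 2 = sqnorm (mxvec A).
Proof.
rewrite frob_sqrE sqnormE (reindex _ (curry_mxvec_bij _ _)) /= pair_big /=.
by apply: eq_bigr => -[i j] _; rewrite mxvecE.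
Qed.

Lemma sqr_entry_le_frob m (A : 'M[R]_m) i j : A i j ^+ 2 <= frob A ^+ 2.
Proof. by rewrite frob_sqr_mxvec -mxvecE sqr_coord_le_sqnorm. Qed.

Lemma sqnorm_midpoint m (u v : 'rV[R]_m) :
  sqnorm (2^-1 *: (u + v)) = 2^-1 * (sqnorm u + sqnorm v) - 4^-1 * sqnorm (u - v).
Proof.
rewrite -!qform1 qformZ !qformD ?tr_scalar_mx // qformN bformNr.
by field.
Qed.

Lemma frob_sqr_midpoint m (A A' : 'M[R]_m) :
  frob (2^-1 *: (A + A')) ^+ 2 =
    2^-1 * (frob A ^+ 2 + frob A' ^+ 2) - 4^-1 * frob (A - A') ^+ 2.
Proof. by rewrite !frob_sqr_mxvec linearZ linearD linearB sqnorm_midpoint. Qed.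

Lemma frob_sqr_gt0 m (A : 'M[R]_m) : A != 0 -> 0 < frob A ^+ 2.
Proof. by rewrite frob_sqr_mxvec sqnorm_gt0 mxvec_eq0. Qed.

Lemma continuous_frob_sqr (T : topologicalType) m (F : T -> 'M[R]_m) :
  (forall i j, continuous (fun t => F t i j)) -> continuous (fun t => frob (F t) ^+ 2).
Proof.
move=> cF; under eq_fun do rewrite frob_sqrE.
by do 2!apply: continuous_sum => ?; under eq_fun do rewrite expr2; exact: continuous_mul.
Qed.

Lemma continuous_trace_mul (T : topologicalType) m (C : 'M[R]_m) (F : T -> 'M[R]_m) :
  (forall i j, continuous (fun t => F t i j)) -> continuous (fun t => \tr (C *m F t)).
Proof.
move=> cF; rewrite (_ : (fun t => _) = fun t => \sum_i \sum_j C i j * F t j i).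
  do 2!apply: continuous_sum => ?.
  by apply: continuous_mul; [exact: cst_continuous | exact: cF].
by apply: funext => t; apply: eq_bigr => i _; rewrite mxE.
Qed.

End Frobenius.

Section Minimizers.
Variable R : realType.
Local Open Scope classical_set_scope.

Lemma compact_sublevel_min (T : topologicalType) (C : set T) (f : T -> R) x0 :
  C x0 -> continuous f -> compact (C `&` [set x | f x <= f x0]) ->
  exists2 c, C c & forall x, C x -> f c <= f x.
Proof.
move=> Cx0 cf cK; have Kx0 : (C `&` [set x | f x <= f x0]) x0 by split => /=.
have [c /set_mem [Cc _] cmin] :=
  compact_EVT_min (ex_intro _ x0 Kx0) cK (continuous_subspaceT cf).
have cx0 : f c <= f x0 by exact/cmin/mem_set.
exists c => // x Cx; have [fx|/ltW fx] := leP (f x) (f x0).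
  by apply/cmin/mem_set.
exact: le_trans fx.
Qed.

Lemma midpoint_convex_min_unique (U : eqType) (C : U -> Prop) (f : U -> R)
    (mid : U -> U -> U) :
  (forall a b, C a -> C b -> C (mid a b)) ->
  (forall a b, C a -> C b -> a != b -> f (mid a b) < 2^-1 * (f a + f b)) ->
  forall a b, C a -> C b ->
    (forall x, C x -> f a <= f x) -> (forall x, C x -> f b <= f x) -> a = b.
Proof.
move=> Cmid fmid a b Ca Cb amin bmin; apply/eqP/negP => /negP ab.
have := fmid a b Ca Cb ab; have := amin _ (Cmid a b Ca Cb).
have := amin b Cb; have := bmin a Ca; lra.
Qed.

End Minimizers.

Section Problem.
Variables (R : realType) (p : nat) (T : eqType) (s : 'I_p -> T) (Nb : 'I_p -> {set 'I_p}).
Variables (nu eps gamma : R) (B S : 'M[R]_p).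
Hypotheses (nu_gt : p%:R < nu) (eps_gt0 : 0 < eps) (gamma_gt0 : 0 < gamma).
Hypotheses (pdB : pdmx B) (psdS : psdmx S).
Local Open Scope classical_set_scope.
Local Notation P := (Pgamma nu gamma B S).

Lemma setMP (X : 'M[R]_p) :
  setM eps X <-> X^T = X /\ forall u, eps * sqnorm u <= qform X u.
Proof.
split=> [[sX [_ psdX]]|[sX Xe]].
  by split=> // u; rewrite -subr_ge0 -qformBscalar -[u]trmxK -qform_trmx.
split=> //; split=> [|v]; first by rewrite /symmx linearB /= sX tr_scalar_mx.
by rewrite qform_trmx qformBscalar subr_ge0.
Qed.

Lemma setM_pd (X : 'M[R]_p) : setM eps X -> forall u, u != 0 -> 0 < qform X u.
Proof.
case/setMP => _ Xe u u0; apply: lt_le_trans (Xe u).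
by rewrite mulr_gt0 // sqnorm_gt0.
Qed.

Lemma det_setM_ge (X : 'M[R]_p) : setM eps X -> eps ^+ p <= \det X.
Proof.
case/setMP => sX Xe; have [Q [d [Qo -> de]]] := symmx_spectral_ge sX Xe.
rewrite det_spectral // -[p in eps ^+ p]card_ord -prodr_const.
by apply: ler_prod => i _; rewrite (ltW eps_gt0) de.
Qed.

Lemma setM_midpoint (X X' : 'M[R]_p) :
  setM eps X -> setM eps X' -> setM eps (2^-1 *: (X + X')).
Proof.
move=> /setMP [sX Xe] /setMP [sX' X'e]; apply/setMP; split.
  by rewrite linearZ /= linearD /= sX sX'.
by move=> u; rewrite qformZmx qformDmx; have := Xe u; have := X'e u; lra.
Qed.

Lemma setN_midpoint (Y Y' : 'M[R]_p) : setN s Nb Y -> setN s Nb Y' ->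
  setN s Nb (2^-1 *: (Y + Y')).
Proof.
case=> Yd Yn Y0 [Y'd Y'n Y'0]; split=> [i j sij | i j k l ij kl sik sjl | i j ij ji].
- by rewrite !mxE (Yd _ _ sij) (Y'd _ _ sij).
- by rewrite !mxE (Yn _ _ _ _ ij kl sik sjl) (Y'n _ _ _ _ ij kl sik sjl).
- by rewrite !mxE (Y0 _ _ ij ji) (Y'0 _ _ ij ji) addr0 mulr0.
Qed.

Lemma qform_invmxB_S_ge :
  exists2 c, 0 < c & forall u, c * sqnorm u <= qform (invmx B + S) u.
Proof.
case: pdB => sB pdB'; case: psdS => _ psdS'.
have qB u : u != 0 -> 0 < qform B u.
  by move=> u0; rewrite -[u]trmxK -qform_trmx pdB' // trmx_eq0.
apply: pd_qform_ge => u u0; rewrite qformDmx ltr_wpDr ?pd_invmx //.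
by rewrite -[u]trmxK -qform_trmx.
Qed.

Lemma Pgamma_ge : exists2 c, 0 < c & exists K, forall X Y, setM eps X ->
  c * \tr X + gamma / 2 * frob (X - Y) ^+ 2 - K <= P X Y.
Proof.
have [c c0 Cc] := qform_invmxB_S_ge; have k0 : 0 < nu - p%:R by rewrite subr_gt0.
exists (c / 2); first by rewrite divr_gt0.
exists (p%:R * ((nu - p%:R) * ln (2 * (nu - p%:R) / c))) => X Y XM.
have /setMP [sX Xe] := XM.
have := ln_det_le_trace k0 c0 sX (setM_pd XM).
have : c * \tr X <= \tr ((invmx B + S) *m X).
  apply: trace_mul_ge => // u; apply: le_trans (Xe u).
  by rewrite mulr_ge0 ?sqnorm_ge0 ?ltW.
rewrite /Pgamma; lra.
Qed.

Lemma ln_det_midpoint_lt (X X' : 'M[R]_p) : setM eps X -> setM eps X' -> X != X' ->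
  ln (\det X) + ln (\det X') < 2 * ln (\det (2^-1 *: (X + X'))).
Proof.
move=> XM X'M XX'; have det_gt0 (Z : 'M[R]_p) : setM eps Z -> 0 < \det Z.
  by move=> ZM; apply: lt_le_trans (det_setM_ge ZM); rewrite exprn_gt0.
have /setMP [sX _] := XM; have /setMP [sX' _] := X'M.
have midM := setM_midpoint XM X'M.
rewrite -lnM ?posrE ?det_gt0 // mulr_natl -lnXn ?det_gt0 //.
rewrite ltr_ln ?posrE ?mulr_gt0 ?exprn_gt0 ?det_gt0 //.
exact: det_midpoint_lt (setM_pd XM) (setM_pd X'M) XX'.
Qed.

Lemma Pgamma_midpoint_lt (X Y X' Y' : 'M[R]_p) :
  setM eps X -> setM eps X' -> (X, Y) != (X', Y') ->
  P (2^-1 *: (X + X')) (2^-1 *: (Y + Y')) < 2^-1 * (P X Y + P X' Y').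
Proof.
move=> XM X'M XY; have k0 : 0 < nu - p%:R by rewrite subr_gt0.
rewrite /Pgamma; have -> : 2^-1 *: (X + X') - 2^-1 *: (Y + Y') = 2^-1 *: ((X - Y) + (X' - Y')).
  by rewrite -scalerBr opprD addrACA.
rewrite frob_sqr_midpoint -scalemxAr mulmxDr mxtraceZ mxtraceD.
have frob0 := sqr_ge0 (frob (X - Y - (X' - Y'))).
have [XX'|XX'] := eqVneq X X'.
  have YY' : X - Y - (X' - Y') != 0.
    rewrite XX' opprB addrC addrA subrK subr_eq0 eq_sym.
    by move: XY; rewrite XX' xpair_eqE eqxx.
  have midX : 2^-1 *: (X + X) = X.
    by apply/matrixP => i j; rewrite !mxE; field.
  have := mulr_gt0 gamma_gt0 (frob_sqr_gt0 YY'); rewrite -XX' midX; lra.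
have := mulr_ge0 (ltW gamma_gt0) frob0.
have := ln_det_midpoint_lt XM X'M XX'; rewrite -(ltr_pM2l k0); lra.
Qed.

(* Pairs [(X, Y)] are encoded as row vectors, where Heine-Borel is available. *)
Local Notation V := 'rV[R]_(p * p + p * p).

Definition vfst (v : V) : 'M[R]_p := vec_mx (lsubmx v).
Definition vsnd (v : V) : 'M[R]_p := vec_mx (rsubmx v).
Definition vpair (X Y : 'M[R]_p) : V := row_mx (mxvec X) (mxvec Y).

Lemma vpairK1 X Y : vfst (vpair X Y) = X.
Proof. by rewrite /vfst row_mxKl mxvecK. Qed.

Lemma vpairK2 X Y : vsnd (vpair X Y) = Y.
Proof. by rewrite /vsnd row_mxKr mxvecK. Qed.

Lemma vpairE v : vpair (vfst v) (vsnd v) = v.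
Proof. by rewrite /vpair !vec_mxK hsubmxK. Qed.

Lemma continuous_vfst : forall i j, continuous (fun v => vfst v i j).
Proof. by move=> i j; under eq_fun do rewrite !mxE; exact: coord_continuous. Qed.

Lemma continuous_vsnd : forall i j, continuous (fun v => vsnd v i j).
Proof. by move=> i j; under eq_fun do rewrite !mxE; exact: coord_continuous. Qed.

Definition feasible (v : V) := setM eps (vfst v) /\ setN s Nb (vsnd v).

Lemma closed_feasible : closed feasible.
Proof.
apply: closedI; first exact: closed_setM continuous_vfst.
by apply: closed_setN; exact: continuous_vsnd.
Qed.

(* [ln] is not continuous at [0]: clamping [det X] below by [eps ^+ p] makes the objective
   continuous everywhere without changing it on [M] (det_setM_ge). *)
Definition Pvec (v : V) : R :=
  - (nu - p%:R) * ln (Num.max (\det (vfst v)) (eps ^+ p))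
  + \tr ((invmx B + S) *m vfst v) + gamma / 2 * frob (vfst v - vsnd v) ^+ 2.

Lemma Pvec_vpair X Y : setM eps X -> Pvec (vpair X Y) = P X Y.
Proof. by move=> XM; rewrite /Pvec vpairK1 vpairK2 max_l ?det_setM_ge. Qed.

Lemma continuous_Pvec : continuous Pvec.
Proof.
have cdet := continuous_det continuous_vfst.
have cln : continuous (fun v => ln (Num.max (\det (vfst v)) (eps ^+ p))).
  have cmax : continuous (fun v => Num.max (\det (vfst v)) (eps ^+ p)).
    move=> v; have ceps : continuous (fun _ : V => eps ^+ p) by exact: cst_continuous.
    exact: (@continuous_max _ _ (fun v => \det (vfst v)) _ v (cdet v) (ceps v)).
  move=> v; apply: (continuous_comp (cmax v)).
  by apply: continuous_ln; rewrite lt_max exprn_gt0 ?orbT.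
have ctr := @continuous_trace_mul _ _ _ (invmx B + S) _ continuous_vfst.
have cfr : continuous (fun v => frob (vfst v - vsnd v) ^+ 2).
  apply: continuous_frob_sqr => i j.
  under eq_fun => v do rewrite [(vfst v - _) i j]mxE [(- vsnd v) i j]mxE.
  by apply: continuous_sub; [exact: continuous_vfst | exact: continuous_vsnd].
rewrite /Pvec; apply: continuous_add; first apply: continuous_add.
- by apply: continuous_mul => //; exact: cst_continuous.
- exact: ctr.
- by apply: continuous_mul => //; exact: cst_continuous.
Qed.

Lemma abs_vpair_le (X Y : 'M[R]_p) b :
  (forall i j, `|X i j| <= b) -> (forall i j, `|Y i j| <= b) ->
  forall k, `|vpair X Y 0 k| <= b.
Proof.
move=> Xb Yb k; rewrite -(splitK k); case: (fintype.split k) => k' /=.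
  by rewrite row_mxEl; case/mxvec_indexP: k' => i j; rewrite mxvecE.
by rewrite row_mxEr; case/mxvec_indexP: k' => i j; rewrite mxvecE.
Qed.

Lemma feasible_sublevel_bounded L :
  exists2 b, 0 <= b & forall v, feasible v -> Pvec v <= L -> forall k, `|v 0 k| <= b.
Proof.
have [c c0 [K PK]] := Pgamma_ge.
set bX := (L + K) / c; set bD := 2 * (L + K) / gamma.
exists (`|bX| + (1 + `|bD|)) => [|v [XM YN] vL]; first by rewrite !addr_ge0.
have := PK _ (vsnd v) XM; rewrite -Pvec_vpair // vpairE => PXY.
rewrite -(vpairE v); set X := vfst v in XM PXY *; set Y := vsnd v in PXY *.
have /setMP [sX Xe] := XM.
have psdX u : 0 <= qform X u by apply: le_trans (Xe u); rewrite mulr_ge0 ?sqnorm_ge0 ?ltW.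
have tr0 := psd_trace_ge0 psdX; have F0 := sqr_ge0 (frob (X - Y)).
have gF0 := mulr_ge0 (ltW gamma_gt0) F0; have ctr0 := mulr_ge0 (ltW c0) tr0.
have trX : \tr X <= bX by rewrite /bX ler_pdivlMr //; lra.
have FbD : frob (X - Y) ^+ 2 <= bD by rewrite /bD ler_pdivlMr //; lra.
have Xb i j : `|X i j| <= `|bX|.
  by apply: le_trans (psd_abs_le_trace i j sX psdX) (le_trans trX (ler_norm _)).
have Db i j : `|X i j - Y i j| <= 1 + `|bD|.
  have := le_trans (sqr_entry_le_frob (X - Y) i j) (le_trans FbD (ler_norm _)).
  rewrite [(X - Y) i j]mxE [(- Y) i j]mxE => D2.
  have B0 := normr_ge0 bD.
  by rewrite ler_norml; apply/andP; split; nra.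
apply: abs_vpair_le => i j; first by rewrite ler_wpDr // addr_ge0.
have -> : Y i j = X i j - (X i j - Y i j) by rewrite opprB addrC subrK.
by apply: le_trans (ler_normB _ _) _; rewrite lerD.
Qed.

Lemma compact_feasible_sublevel L : compact (feasible `&` [set v | Pvec v <= L]).
Proof.
apply: bounded_closed_compact; last first.
  by apply: closedI; [exact: closed_feasible | exact: closed_le_fun continuous_Pvec].
have [b b0 vb] := feasible_sublevel_bounded L.
exists b; split=> [|M bM v [Fv vL]]; first exact: num_real.
change (mx_norm v <= M); rewrite mx_normrE; apply: bigmax_le => [|[i k] _ /=].
  exact: le_trans b0 (ltW bM).
by rewrite (ord1 i); apply: le_trans (vb v Fv vL k) (ltW bM).
Qed.

Lemma feasible_vpair_scalar : feasible (vpair eps%:M 0).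
Proof.
rewrite /feasible vpairK1 vpairK2; split; last by split=> *; rewrite !mxE.
apply/setMP; split=> [|u]; first by rewrite tr_scalar_mx.
by rewrite -scalemx1 qformZmx qform1.
Qed.

Lemma Pgamma_min_exists : exists XY : 'M[R]_p * 'M[R]_p,
  [/\ setM eps XY.1, setN s Nb XY.2 &
      forall X Y, setM eps X -> setN s Nb Y -> P XY.1 XY.2 <= P X Y].
Proof.
have [v [XM YN] vmin] := compact_sublevel_min feasible_vpair_scalar continuous_Pvec
  (compact_feasible_sublevel (L := _)).
exists (vfst v, vsnd v); split=> // X Y XM' YN'.
rewrite -Pvec_vpair // vpairE -(Pvec_vpair Y XM'); apply: vmin.
by rewrite /feasible vpairK1 vpairK2.
Qed.

Lemma Pgamma_min_unique (X Y X' Y' : 'M[R]_p) :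
  setM eps X -> setN s Nb Y -> setM eps X' -> setN s Nb Y' ->
  (forall X'' Y'', setM eps X'' -> setN s Nb Y'' -> P X Y <= P X'' Y'') ->
  (forall X'' Y'', setM eps X'' -> setN s Nb Y'' -> P X' Y' <= P X'' Y'') ->
  (X, Y) = (X', Y').
Proof.
move=> XM YN X'M Y'N XYmin X'Y'min.
apply: (@midpoint_convex_min_unique _ _ (fun xy => setM eps xy.1 /\ setN s Nb xy.2)
  (fun xy => P xy.1 xy.2) (fun a b => (2^-1 *: (a.1 + b.1), 2^-1 *: (a.2 + b.2)))) => //.
- by move=> [? ?] [? ?] [? ?] [? ?]; split; [exact: setM_midpoint | exact: setN_midpoint].
- by move=> [? ?] [? ?] [? _] [? _]; exact: Pgamma_midpoint_lt.
- by move=> [? ?] []; exact: XYmin.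
- by move=> [? ?] []; exact: X'Y'min.
Qed.

End Problem.

Theorem theorem2 (R : realType) (p : nat) (T : eqType) (s : 'I_p -> T)
  (Nb : 'I_p -> {set 'I_p}) (nu eps gamma : R) (B S : 'M[R]_p) :
  (1 <= p)%N ->
  (forall i, i \notin Nb i) ->
  p%:R < nu -> 0 < eps -> 0 < gamma ->
  pdmx B -> psdmx S ->
  exists XY : 'M[R]_p * 'M[R]_p,
    [/\ setM eps XY.1, setN s Nb XY.2,
        (forall X Y, setM eps X -> setN s Nb Y ->
           Pgamma nu gamma B S XY.1 XY.2 <= Pgamma nu gamma B S X Y)
      & (forall X Y, setM eps X -> setN s Nb Y ->
           (forall X' Y', setM eps X' -> setN s Nb Y' ->
              Pgamma nu gamma B S X Y <= Pgamma nu gamma B S X' Y') ->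
           (X, Y) = XY)].
Proof.
move=> _ _ nu_gt eps_gt0 gamma_gt0 pdB psdS.
have [[X0 Y0] [/= X0M Y0N X0min]] := Pgamma_min_exists s Nb nu_gt eps_gt0 gamma_gt0 pdB psdS.
exists (X0, Y0); split=> // X Y XM YN Xmin.
exact: (Pgamma_min_unique nu_gt eps_gt0 gamma_gt0 XM YN X0M Y0N Xmin X0min).
Qed.
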